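(* Let $\boldsymbol\mu\in\mathcal{P}(\Phi)$ and suppose $k=\|\boldsymbol\mu\|+\ell(\boldsymbol\mu^e)\le n$. Then the centralizer $\mathcal A_{\boldsymbol\mu^{\uparrow n}}$ of $J_{\boldsymbol\mu^{\uparrow n}}$ in $G_n$ has cardinality $$|\mathcal A_{\boldsymbol\mu^{\uparrow k}}|\cdot|G_{n-k}|\cdot\big|\{B\in M_{k\times(n-k)}(\mathbb F_q)\mid J_{\boldsymbol\mu^{\uparrow k}}B=B\}\big|\cdot\big|\{C\in M_{(n-k)\times k}(\mathbb F_q)\mid CJ_{\boldsymbol\mu^{\uparrow k}}=C\}\big|,$$ where $\mathcal A_{\boldsymbol\mu^{\uparrow k}}$ is the centralizer of $J_{\boldsymbol\mu^{\uparrow k}}$ in $G_k$.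
   Context: $q$ is a prime power, $G_n=GL_n(\mathbb F_q)$, $M_{a\times b}(\mathbb F_q)$ the $a\times b$ matrices. $\Phi$ is the set of monic irreducible polynomials in $\mathbb F_q[t]$ other than $t$, $d(f)$ the degree of $f$; $\mathcal{P}(\Phi)$ is the set of finitely supported maps $\boldsymbol\lambda$ from $\Phi$ to partitions, $\|\boldsymbol\lambda\|=\sum_f d(f)|\boldsymbol\lambda(f)|$, $\boldsymbol\lambda^e=\boldsymbol\lambda(t-1)$, $\ell$ = number of nonzero parts. For $f=t^d-\sum_{i=1}^d a_it^{i-1}\in\Phi$, $J(f)$ is the $d\times d$ companion matrix with $1$'s on the superdiagonal, last row $(a_1,\dots,a_d)$, zeros elsewhere; $J_m(f)$ is the $dm\times dm$ block upper triangular matrix with $m$ diagonal blocks $J(f)$ and blocks $I_d$ on the block superdiagonal. $J_{\boldsymbol\lambda}$ is the block diagonal matrix with blocks $J_{\boldsymbol\lambda_i(f)}(f)$ over all $f,i$, blocks for $f\ne t-1$ first, then those for $t-1$ in nonincreasing size. For $r=\ell(\boldsymbol\mu^e)$ and $n\ge\|\boldsymbol\mu\|+r$, $\boldsymbol\mu^{\uparrow n}$ agrees with $\boldsymbol\mu$ off $t-1$ and $\boldsymbol\mu^{\uparrow n}(t-1)=(\boldsymbol\mu^e_1+1,\dots,\boldsymbol\mu^e_r+1,1,\dots,1)$ with $n-r-\|\boldsymbol\mu\|$ trailing ones. *)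

From HB Require Import structures.
From mathcomp Require Import all_boot all_order all_algebra all_field.
Set Implicit Arguments. Unset Strict Implicit. Unset Printing Implicit Defensive.
Import GRing.Theory.
Local Open Scope ring_scope.

Section Defs.
Variable F : finFieldType.

Definition pdeg (f : {poly F}) : nat := (size f).-1.

Definition inPhi (f : {poly F}) : Prop :=
  f \is monic /\ irreducible_poly f /\ f != 'X.

Definition is_partition (l : seq nat) : bool :=
  sorted geq l && all (fun x => 0 < x)%N l.

(* An element of P(Phi), represented by the list of its (f, boldlambda(f)),
   f ranging over a finite set containing the support. *)
Definition wf_PPhi (mu : seq ({poly F} * seq nat)) : Prop :=
  uniq (map fst mu) /\
  (forall p, p \in mu -> inPhi p.1 /\ is_partition p.2).

Definition tm1 : {poly F} := 'X - 1.

Definition pnorm (mu : seq ({poly F} * seq nat)) : nat :=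
  \sum_(p <- mu) (pdeg p.1 * sumn p.2)%N.

Definition mue (mu : seq ({poly F} * seq nat)) : seq nat :=
  match [seq p <- mu | p.1 == tm1] with
  | p :: _ => p.2
  | [::] => [::]
  end.

Definition uparrow (mu : seq ({poly F} * seq nat)) (n : nat)
  : seq ({poly F} * seq nat) :=
  [seq p <- mu | p.1 != tm1] ++
  [:: (tm1, map S (mue mu) ++ nseq (n - size (mue mu) - pnorm mu) 1%N)].

(* entries (0-indexed) of the companion matrix J(f), d = d(f) *)
Definition J_entry (f : {poly F}) (r c : nat) : F :=
  if (r < (pdeg f).-1)%N then (c == r.+1)%:R else - f`_c.

Definition Jm_entry (f : {poly F}) (i j : nat) : F :=
  let d := pdeg f in
  let bi := (i %/ d)%N in let bj := (j %/ d)%N in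
  let r := (i %% d)%N in let c := (j %% d)%N in
  if bi == bj then J_entry f r c
  else if bj == bi.+1 then (r == c)%:R else 0.

Fixpoint blk_entry (s : seq ({poly F} * nat)) (i j : nat) : F :=
  match s with
  | [::] => 0
  | (f, m) :: s' =>
      let s0 := (pdeg f * m)%N in
      if (i < s0)%N then (if (j < s0)%N then Jm_entry f i j else 0)
      else if (j < s0)%N then 0 else blk_entry s' (i - s0) (j - s0)
  end.

(* list of blocks of J_lambda: first f <> t-1 (in list order), then t-1 ones
   in nonincreasing size (partitions are already nonincreasing) *)
Definition blocks (mu : seq ({poly F} * seq nat)) : seq ({poly F} * nat) :=
  flatten [seq [seq (p.1, m) | m <- p.2] | p <- mu & p.1 != tm1] ++
  [seq (tm1, m) | m <- mue mu].

Definition Jmat (mu : seq ({poly F} * seq nat)) (N : nat) : 'M[F]_N :=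
  \matrix_(i < N, j < N) blk_entry (blocks mu) i j.

Definition centralizer (N : nat) (J : 'M[F]_N) : {set 'M[F]_N} :=
  [set A : 'M[F]_N | (A \in unitmx) && (A *m J == J *m A)].

Definition GL_set (N : nat) : {set 'M[F]_N} := [set A : 'M[F]_N | A \in unitmx].

End Defs.

From HB Require Import structures.
From mathcomp Require Import all_boot all_order all_algebra all_field.
Set Implicit Arguments. Unset Strict Implicit. Unset Printing Implicit Defensive.
Import GRing.Theory.
Local Open Scope ring_scope.

(* For n >= k the extra parts of mu^{up n} are
   1 x 1 blocks equal to 1, so J_{mu^{up n}} = diag(J, I_{n-k}) with
   J = J_{mu^{up k}}.  Each block of J is either J_m(f) with f <> t-1, and
   then J_m(f) - 1 is invertible because f(1) <> 0, or a unipotent Jordan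
   block of size at least 2.  In both cases every left fixed vector of the
   block annihilates every right fixed vector, and this property passes to
   block-diagonal matrices.  For such a J, the matrix X = [[P, Q], [R, S]]
   commutes with diag(J, 1) iff P commutes with J, JQ = Q and RJ = R; then
   R P^-1 Q = 0, so X is a lower unitriangular matrix times [[P, Q], [0, S]]
   and is invertible iff P and S are.  Hence X |-> (P, S, Q, R) is a
   bijection from the centralizer onto the product of the four sets. *)

Section FixedOrthogonal.
Variable R : pzRingType.

Definition fixed_orthogonal n (A : 'M[R]_n) :=
  forall p q (X : 'M[R]_(p, n)) (Y : 'M[R]_(n, q)),
    X *m A = X -> A *m Y = Y -> X *m Y = 0.

Lemma fixed_orthogonal0 (A : 'M[R]_0) : fixed_orthogonal A.
Proof. by move=> p q X Y _ _; apply/matrixP => i j; rewrite !mxE big_ord0. Qed.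

Lemma fixed_orthogonal_block_diag a b (A : 'M[R]_a) (B : 'M[R]_b) :
  fixed_orthogonal A -> fixed_orthogonal B -> fixed_orthogonal (block_mx A 0 0 B).
Proof.
move=> oA oB p q X Y.
rewrite -[X]hsubmxK -[Y]vsubmxK mul_row_block mul_block_col !mulmx0 !mul0mx.
rewrite !addr0 !add0r => /eq_row_mx[XA XB] /eq_col_mx[AY BY].
by rewrite mul_row_col (oA _ _ _ _ XA AY) (oB _ _ _ _ XB BY) addr0.
Qed.

Lemma fixed_orthogonal_jordan n (A : 'M[R]_n) : (1 < n)%N ->
  (forall i j : 'I_n, A i j = (i == j)%:R + (j == i.+1 :> nat)%:R) ->
  fixed_orthogonal A.
Proof.
move=> n_gt1 AE p q X Y XA AY.
pose N : 'M[R]_n := \matrix_(i, j) (j == i.+1 :> nat)%:R.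
have eA : A = 1%:M + N by apply/matrixP => i j; rewrite !mxE AE.
have XN : X *m N = 0 by apply: (addrI X); rewrite addr0 -{3}XA eA mulmxDr mulmx1.
have NY : N *m Y = 0 by apply: (addrI Y); rewrite addr0 -{3}AY eA mulmxDl mul1mx.
have X0 x (i : 'I_n) : (i.+1 < n)%N -> X x i = 0.
  move=> lti; have /matrixP/(_ x (Ordinal lti)) := XN.
  rewrite !mxE (bigD1 i) //= mxE eqxx mulr1 big1 ?addr0 // => j /negbTE ji.
  by rewrite mxE /= eqSS eq_sym (ji : (j == i :> nat) = false) mulr0.
have Y0 (i : 'I_n) y : (0 < i)%N -> Y i y = 0.
  move=> i_gt0; have lti : (i.-1 < n)%N by rewrite (leq_ltn_trans (leq_pred i)).
  have /matrixP/(_ (Ordinal lti) y) := NY.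
  rewrite !mxE (bigD1 i) //= mxE prednK // eqxx mul1r big1 ?addr0 // => j /negbTE ji.
  by rewrite mxE /= prednK // (ji : (j == i :> nat) = false) mul0r.
apply/matrixP => x y; rewrite !mxE big1 // => i _.
have [i0|i_gt0] := posnP i; last by rewrite Y0 // mulr0.
by rewrite X0 ?mul0r // i0.
Qed.

End FixedOrthogonal.

Section UnitSub1.
Variable R : comUnitRingType.

Lemma invmx_comm n (P A : 'M[R]_n) :
  P \in unitmx -> P *m A = A *m P -> invmx P *m A = A *m invmx P.
Proof.
move=> uP PA; apply: (canRL (mulmxK uP)).
by rewrite -mulmxA -PA mulmxA mulVmx // mul1mx.
Qed.

Lemma fixed_orthogonal_sub1_unit n (A : 'M[R]_n) :
  A - 1%:M \in unitmx -> fixed_orthogonal A.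
Proof.
move=> uA p q X Y _ AY.
suff -> : Y = 0 by rewrite mulmx0.
by rewrite -[Y](mulKmx uA) mulmxBl mul1mx AY subrr mulmx0.
Qed.

Lemma block_sub1_unit a b (A : 'M[R]_a) (B : 'M[R]_(a, b)) (D : 'M[R]_b) :
  A - 1%:M \in unitmx -> D - 1%:M \in unitmx ->
  block_mx A B 0 D - 1%:M \in unitmx.
Proof.
rewrite scalar_mx_block opp_block_mx add_block_mx !oppr0 !addr0.
by rewrite !unitmxE det_ublock unitrM => -> ->.
Qed.

Lemma castmx_sub1_unit m n (e : m = n) (A : 'M[R]_m) :
  (castmx (e, e) A - 1%:M \in unitmx) = (A - 1%:M \in unitmx).
Proof. by case: n / e; rewrite castmx_id. Qed.

Lemma sub1_unit_mx0 (A : 'M[R]_0) : A - 1%:M \in unitmx.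
Proof. by rewrite unitmxE det_mx00 unitr1. Qed.

End UnitSub1.

Lemma companion_sub1_unit (F : fieldType) (f : {poly F}) :
  f \is monic -> ~~ root f 1 -> companionmx f - 1%:M \in unitmx.
Proof.
move=> mf f1; rewrite -row_free_unit -kermx_eq0.
have := f1; rewrite -{1}(companionmxK mf) -eigenvalue_root_char.
by rewrite /eigenvalue /eigenspace negbK.
Qed.

Section BlockCentralizer.
Variables (K : comUnitRingType) (k m : nat) (J : 'M[K]_k).
Let D : 'M[K]_(k + m) := block_mx J 0 0 1%:M.

Lemma commute_block_diag1
    (P : 'M_k) (Q : 'M_(k, m)) (R : 'M_(m, k)) (S : 'M_m) :
  (block_mx P Q R S *m D == D *m block_mx P Q R S) =
  [&& P *m J == J *m P, J *m Q == Q & R *m J == R].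
Proof.
rewrite !mulmx_block !mulmx0 !mul0mx !mulmx1 !mul1mx !addr0 !add0r.
by apply/eqP/and3P => [/eq_block_mx[-> <- -> _]|[/eqP-> /eqP-> /eqP->]].
Qed.

Hypothesis oJ : fixed_orthogonal J.

Lemma unitmx_block_commute
    (P : 'M_k) (Q : 'M_(k, m)) (R : 'M_(m, k)) (S : 'M_m) :
  P *m J = J *m P -> J *m Q = Q -> R *m J = R ->
  (block_mx P Q R S \in unitmx) = (P \in unitmx) && (S \in unitmx).
Proof.
move=> PJ JQ RJ; apply/idP/andP => [uX|[uP uS]].
  pose Y := invmx (block_mx P Q R S).
  have /eqP : Y *m D = D *m Y.
    apply: invmx_comm => //; apply/eqP.
    by rewrite commute_block_diag1 PJ JQ RJ !eqxx.
  rewrite -[Y]submxK commute_block_diag1 => /and3P[_ /eqP JQ' /eqP RJ'].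
  have := mulmxV uX; rewrite -/Y -[Y]submxK mulmx_block (scalar_mx_block k m).
  case/eq_block_mx => PP' _ _ SS'.
  rewrite (oJ RJ JQ') add0r in SS'.
  split; last by case: (mulmx1_unit SS').
  have R'Q : dlsubmx Y *m Q = 0 by apply: oJ.
  suff /mulmx1_unit[] : P *m (ulsubmx Y *m (1%:M + Q *m dlsubmx Y)) = 1%:M by [].
  rewrite mulmxA (canRL (addrK _) PP') mulmxDr mulmx1 mulmxBl mul1mx.
  by rewrite -!mulmxA (mulmxA (dlsubmx Y)) R'Q mul0mx mulmx0 subr0 addrNK.
have RPQ : R *m invmx P *m Q = 0.
  by apply: oJ; rewrite // -mulmxA (invmx_comm uP PJ) mulmxA RJ.
have -> : block_mx P Q R S =
          block_mx 1%:M 0 (R *m invmx P) 1%:M *m block_mx P Q 0 S.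
  by rewrite mulmx_block !mul1mx !mul0mx RPQ (mulmxKV uP) !addr0 add0r.
rewrite unitmx_mul !unitmxE det_ublock det_lblock !det1 mul1r unitr1.
by rewrite unitrM -!unitmxE uP uS.
Qed.

End BlockCentralizer.

Lemma card_centralizer_block_diag1 (F : finFieldType) k m (J : 'M[F]_k) :
  fixed_orthogonal J ->
  #|centralizer (block_mx J 0 0 (1%:M : 'M[F]_m))| =
    (#|centralizer J| * #|GL_set F m|
     * #|[set Q : 'M[F]_(k, m) | J *m Q == Q]|
     * #|[set R : 'M[F]_(m, k) | R *m J == R]|)%N.
Proof.
move=> oJ.
pose glue (x : 'M[F]_k * 'M[F]_m * 'M[F]_(k, m) * 'M[F]_(m, k)) :=
  block_mx x.1.1.1 x.1.2 x.2 x.1.1.2.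
have glue_inj : injective glue.
  by move=> [[[P S] Q] R] [[[P' S'] Q'] R'] /eq_block_mx /= [-> -> -> ->].
rewrite -!cardsX -(card_imset _ glue_inj); apply: eq_card => X.
rewrite inE; apply/andP/imsetP => [[uX cX]|[[[[P S] Q] R]] + ->].
  move: cX uX; rewrite -[X]submxK commute_block_diag1.
  case/and3P=> /eqP PJ /eqP JQ /eqP RJ.
  rewrite (unitmx_block_commute oJ) // => /andP[uP uS].
  exists (ulsubmx X, drsubmx X, ursubmx X, dlsubmx X) => //.
  by rewrite !inE uP uS /= PJ JQ RJ !eqxx.
rewrite !inE /= => /andP[/andP[/andP[/andP[uP PJ] uS] JQ] RJ].
rewrite commute_block_diag1 PJ JQ RJ (unitmx_block_commute oJ) ?uP ?uS //; exact/eqP.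
Qed.

Section JordanBlocks.
Variable F : finFieldType.
Implicit Types f : {poly F}.

Definition Jmx f m : 'M[F]_(pdeg f * m) := \matrix_(i, j) Jm_entry f i j.

Lemma J_entry_companion f (r c : 'I_(pdeg f)) :
  J_entry f r c = companionmx f r c.
Proof.
have lt_r := ltn_ord r; rewrite mxE /J_entry.
have -> : (r < (pdeg f).-1)%N = (r != (pdeg f).-1 :> nat).
  by rewrite ltn_neqAle -ltnS prednK ?(leq_ltn_trans _ lt_r) ?lt_r ?andbT.
by case: eqP; rewrite //= eq_sym.
Qed.

Lemma Jmx_succ f m : (0 < pdeg f)%N ->
  castmx (mulnS _ _, mulnS _ _) (Jmx f m.+1) =
  block_mx (companionmx f) (pid_mx (pdeg f)) 0 (Jmx f m).
Proof.
set d := pdeg f => d_gt0.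
have divD x : ((d + x) %/ d = (x %/ d).+1)%N by rewrite -{1}[d]mul1n divnMDl.
apply/matrixP => i j; rewrite castmxE mxE.
rewrite -[i]splitK -[j]splitK; case: (split i) => i'; case: (split j) => j';
  rewrite /Jm_entry /= ?divD ?modnDl
          ?(divn_small (ltn_ord i')) ?(divn_small (ltn_ord j')).
- by rewrite block_mxEul !modn_small // J_entry_companion.
- rewrite block_mxEur mxE eqSS modn_small // ltn_ord andbT.
  case: (ltnP j' d) => [lt_j'd | le_dj']; first by rewrite divn_small // modn_small.
  rewrite (ltn_eqF (leq_trans (ltn_ord i') le_dj')).
  by rewrite eqn0Ngt divn_gt0 // le_dj'.
- by rewrite block_mxEdl mxE.
- by rewrite block_mxEdr mxE eqSS.
Qed.

Lemma pdeg_gt0 f : inPhi f -> (0 < pdeg f)%N.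
Proof. by case=> _ [[size_f _] _]; rewrite /pdeg -ltnS prednK // ltnW. Qed.

Lemma inPhi_root1 f : inPhi f -> f != tm1 F -> ~~ root f 1.
Proof.
case=> mf [irr_f _] f_neq; apply: contra f_neq => f1.
have /irr_f.2 : 'X - 1%:P %| f by rewrite dvdp_XsubCl.
rewrite size_XsubC eqp_monic ?monicXsubC // => /(_ isT) /eqP <-.
by rewrite /tm1 polyC1.
Qed.

Lemma Jmx_sub1_unit f m : inPhi f -> f != tm1 F -> Jmx f m - 1%:M \in unitmx.
Proof.
move=> f_Phi f_neq; have d_gt0 := pdeg_gt0 f_Phi.
elim: m => [|m IHm].
  by rewrite -(castmx_sub1_unit (muln0 _)) sub1_unit_mx0.
rewrite -(castmx_sub1_unit (mulnS _ _)) Jmx_succ //.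
apply: block_sub1_unit => //.
by rewrite companion_sub1_unit ?inPhi_root1 //; case: f_Phi.
Qed.

Lemma pdeg_tm1 : pdeg (tm1 F) = 1%N.
Proof. by rewrite /pdeg /tm1 -polyC1 size_XsubC. Qed.

Lemma Jm_entry_tm1 i j : Jm_entry (tm1 F) i j = (i == j)%:R + (j == i.+1)%:R.
Proof.
rewrite /Jm_entry /J_entry pdeg_tm1 !divn1 !modn1 /= /tm1 coefB coefX coef1.
case: eqP => [->|_]; last by rewrite add0r; case: eqP.
by rewrite /= sub0r opprK (ltn_eqF (ltnSn j)) addr0.
Qed.

Lemma fixed_orthogonal_Jmx_tm1 m :
  (1 < m)%N -> fixed_orthogonal (Jmx (tm1 F) m).
Proof.
move=> m_gt1; apply: fixed_orthogonal_jordan => [|i j].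
  by rewrite pdeg_tm1 mul1n.
by rewrite mxE Jm_entry_tm1.
Qed.

End JordanBlocks.

Section BlockDiagonal.
Variable F : finFieldType.
Implicit Types (s : seq ({poly F} * nat)) (mu : seq ({poly F} * seq nat)).
Local Notation tm := (tm1 F).

Definition blk_size s : nat := sumn [seq pdeg p.1 * p.2 | p <- s]%N.

Definition blk_mx s : 'M[F]_(blk_size s) := \matrix_(i, j) blk_entry s i j.

Lemma blk_size_cat s1 s2 : blk_size (s1 ++ s2) = (blk_size s1 + blk_size s2)%N.
Proof. by rewrite /blk_size map_cat sumn_cat. Qed.

Lemma blk_entry_cat s1 s2 i j :
  blk_entry (s1 ++ s2) i j =
  if (i < blk_size s1)%N then
    (if (j < blk_size s1)%N then blk_entry s1 i j else 0)
  else if (j < blk_size s1)%N then 0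
  else blk_entry s2 (i - blk_size s1) (j - blk_size s1).
Proof.
elim: s1 i j => [|[f m] s IH] i j /=; first by rewrite !subn0.
rewrite -[blk_size _]/(pdeg f * m + blk_size s)%N.
have [lt_i|le_i] := ltnP i (pdeg f * m); have [lt_j|le_j] := ltnP j (pdeg f * m);
  rewrite ?(ltn_addr _ lt_i) ?(ltn_addr _ lt_j) //; try by case: ifP.
by rewrite IH -!ltn_subLR // !subnDA.
Qed.

Lemma blk_mx_cons f m s :
  blk_mx ((f, m) :: s) = block_mx (Jmx f m) 0 0 (blk_mx s).
Proof.
apply/matrixP => i j; rewrite mxE -[i]splitK -[j]splitK.
case: (split i) => i'; case: (split j) => j' /=.
- by rewrite block_mxEul mxE /= !ltn_ord.
- by rewrite block_mxEur mxE /= ltn_ord ltnNge leq_addr.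
- by rewrite block_mxEdl mxE /= ltn_ord ltnNge leq_addr.
- by rewrite block_mxEdr mxE /= !ltnNge !leq_addr /= !addKn.
Qed.

Lemma fixed_orthogonal_blk_mx s :
  (forall p, p \in s -> fixed_orthogonal (Jmx p.1 p.2)) ->
  fixed_orthogonal (blk_mx s).
Proof.
elim: s => [|[f m] s IHs] os; first exact: fixed_orthogonal0.
rewrite blk_mx_cons; apply: fixed_orthogonal_block_diag; first exact/os/mem_head.
by apply: IHs => p sp; apply/os; rewrite inE sp orbT.
Qed.

Lemma blk_entry_ones m i j :
  blk_entry (nseq m (tm, 1%N)) i j = ((i == j) && (i < m)%N)%:R.
Proof.
elim: m i j => [|m IH] [|i] [|j] /=; rewrite ?andbF ?pdeg_tm1 //=.
  by rewrite Jm_entry_tm1 addr0.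
by rewrite muln1 !subn1 IH.
Qed.

Lemma fixed_orthogonal_Jmat mu N : blk_size (blocks mu) = N ->
  (forall p, p \in blocks mu -> fixed_orthogonal (Jmx p.1 p.2)) ->
  fixed_orthogonal (Jmat mu N).
Proof. by move=> <-; apply: fixed_orthogonal_blk_mx. Qed.

End BlockDiagonal.

Section Uparrow.
Variable F : finFieldType.
Implicit Types mu : seq ({poly F} * seq nat).
Local Notation tm := (tm1 F).

Lemma filter_uparrow mu N :
  [seq p <- uparrow mu N | p.1 != tm] = [seq p <- mu | p.1 != tm].
Proof.
rewrite /uparrow filter_cat /= eqxx cats0 -filter_predI.
by apply: eq_filter => p /=; rewrite andbb.
Qed.

Lemma mue_uparrow mu N :
  mue (uparrow mu N) = map S (mue mu) ++ nseq (N - size (mue mu) - pnorm mu) 1%N.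
Proof.
rewrite {1}/mue /uparrow filter_cat /= eqxx -filter_predI.
by rewrite (eq_filter (a2 := pred0)) ?filter_pred0 // => p /=; rewrite andbN.
Qed.

Lemma blocks_uparrow mu N :
  blocks (uparrow mu N) =
  blocks (uparrow mu 0) ++ nseq (N - (pnorm mu + size (mue mu))) (tm, 1%N).
Proof.
rewrite /blocks !filter_uparrow !mue_uparrow !map_cat sub0n cats0 map_nseq catA.
by rewrite -subnDA addnC.
Qed.

Lemma size_filter_tm mu : wf_PPhi mu -> (size [seq p <- mu | p.1 == tm] <= 1)%N.
Proof.
case=> uniq_mu _; rewrite size_filter -(count_map fst (pred1 tm)).
by rewrite count_uniq_mem ?leq_b1.
Qed.

Lemma pnorm_mue mu : wf_PPhi mu ->
  pnorm mu = (\sum_(p <- mu | p.1 != tm) pdeg p.1 * sumn p.2 + sumn (mue mu))%N.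
Proof.
move=> /size_filter_tm; rewrite /pnorm (bigID (fun p => p.1 == tm)) addnC /=.
rewrite -big_filter /mue.
have : all (fun p => p.1 == tm) [seq p <- mu | p.1 == tm].
  by apply/allP => p; rewrite mem_filter => /andP[].
case: [seq p <- mu | _] => [|p [|//]] /=; first by rewrite big_nil.
by rewrite andbT big_seq1 => /eqP-> _; rewrite pdeg_tm1 mul1n.
Qed.

Lemma mue_gt0 mu x : wf_PPhi mu -> x \in mue mu -> (0 < x)%N.
Proof.
case=> _ wf_mu; rewrite /mue.
have : {subset [seq p <- mu | p.1 == tm] <= mu}.
  by move=> p; rewrite mem_filter => /andP[].
case: [seq p <- mu | _] => [|p r] //= /(_ p (mem_head _ _)) /wf_mu[_ /andP[_ /allP]].
exact.
Qed.

Lemma blk_size_flatten (s : seq ({poly F} * seq nat)) :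
  blk_size (flatten [seq [seq (p.1, m) | m <- p.2] | p <- s]) =
  (\sum_(p <- s) pdeg p.1 * sumn p.2)%N.
Proof.
elim: s => [|p s IHs]; rewrite ?big_nil // big_cons /= blk_size_cat IHs.
congr (_ + _)%N; rewrite /blk_size -map_comp.
by elim: p.2 => [|m l IHl] /=; rewrite ?muln0 ?IHl ?mulnDr.
Qed.

Lemma blk_size_blocks_uparrow0 mu : wf_PPhi mu ->
  blk_size (blocks (uparrow mu 0)) = (pnorm mu + size (mue mu))%N.
Proof.
move=> wf_mu; rewrite /blocks filter_uparrow mue_uparrow sub0n cats0.
rewrite blk_size_cat blk_size_flatten.
rewrite big_filter pnorm_mue // -addnA; congr (_ + _)%N.
rewrite /blk_size -!map_comp; elim: (mue mu) => //= x l ->.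
by rewrite pdeg_tm1 mul1n addnS addSn addnA.
Qed.

Lemma fixed_orthogonal_blocks_uparrow0 mu : wf_PPhi mu ->
  forall p, p \in blocks (uparrow mu 0) -> fixed_orthogonal (Jmx p.1 p.2).
Proof.
move=> wf_mu p; rewrite /blocks filter_uparrow mue_uparrow sub0n cats0 mem_cat.
case/orP => [/flatten_mapP[q] | /mapP[_ /mapP[x x_mue ->] ->]] /=.
  rewrite mem_filter => /andP[q_neq q_mu] /mapP[m _ ->] /=.
  by apply/fixed_orthogonal_sub1_unit/Jmx_sub1_unit => //; case: (wf_mu.2 q q_mu).
by apply: fixed_orthogonal_Jmx_tm1; rewrite ltnS (mue_gt0 wf_mu x_mue).
Qed.

Lemma Jmat_uparrow_add mu m : wf_PPhi mu ->
  let k := (pnorm mu + size (mue mu))%N in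
  Jmat (uparrow mu (k + m)) (k + m) = block_mx (Jmat (uparrow mu k) k) 0 0 1%:M.
Proof.
move=> wf_mu k; apply/matrixP => i j.
rewrite [LHS]mxE blocks_uparrow addKn blk_entry_cat blk_size_blocks_uparrow0 //.
rewrite -[i]splitK -[j]splitK; case: (split i) => i'; case: (split j) => j' /=.
- by rewrite block_mxEul mxE (blocks_uparrow mu k) subnn cats0 !ltn_ord.
- by rewrite block_mxEur mxE ltn_ord ltnNge leq_addr.
- by rewrite block_mxEdl mxE ltn_ord ltnNge leq_addr.
- by rewrite block_mxEdr mxE !ltnNge !leq_addr /= !addKn blk_entry_ones ltn_ord andbT.
Qed.

End Uparrow.

Theorem corollary2p8 (F : finFieldType) (mu : seq ({poly F} * seq nat)) (n : nat) :
  wf_PPhi mu ->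
  let k := (pnorm mu + size (mue mu))%N in
  (k <= n)%N ->
  #|centralizer (Jmat (uparrow mu n) n)| =
    (#|centralizer (Jmat (uparrow mu k) k)| * #|GL_set F (n - k)|
     * #|[set B : 'M[F]_(k, n - k) | Jmat (uparrow mu k) k *m B == B]|
     * #|[set C : 'M[F]_(n - k, k) | C *m Jmat (uparrow mu k) k == C]|)%N.
Proof.
move=> wf_mu k /subnKC; move: (n - k)%N => m <-.
rewrite Jmat_uparrow_add //; apply: card_centralizer_block_diag1.
apply: fixed_orthogonal_Jmat; rewrite blocks_uparrow subnn cats0.
  exact: blk_size_blocks_uparrow0.
exact: fixed_orthogonal_blocks_uparrow0.
Qed.
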